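(* For $0\le\alpha<1$ and $r\ge1$, put $P(r)=r^8-2\alpha^4(r^4-1)-1$. Then $P(1)=0$, $P(r)>0$ for $r>1$, and $1$ is the largest real root of $P$ and satisfies $1>\alpha$. Define $t(r)=\int_1^r \frac{s^2\sqrt{s^4-\alpha^4}}{\sqrt{P(s)}}\,ds$, and as functions of $t\ge0$ set $A_1=-\frac{\sqrt{P(r)}}{r\sqrt{r^4-\alpha^4}}$, $A_2=r$, $A_3=-r$, $B=\sqrt{r^2+\alpha^2}$, $C=\sqrt{r^2-\alpha^2}$. Then $(A_1,A_2,A_3,B,C)$ solves on $t>0$ the system $$ \begin{aligned} A_1'&=\tfrac{(A_2-A_3)^2-A_1^2}{A_2A_3}+\tfrac{A_1^2(B^2+C^2)}{B^2C^2},\quad A_2'=\tfrac{A_1^2-A_2^2+A_3^2}{A_1A_3}-\tfrac{B^2+C^2-2A_2^2}{BC},\quad A_3'=\tfrac{A_1^2+A_2^2-A_3^2}{A_1A_2}-\tfrac{B^2+C^2-2A_3^2}{BC},\\ B'&=-\tfrac{CA_1+BA_2+BA_3}{BC}-\tfrac{(C^2-B^2)(A_2+A_3)}{2A_2A_3C},\quad C'=-\tfrac{BA_1+CA_2+CA_3}{BC}-\tfrac{(B^2-C^2)(A_2+A_3)}{2A_2A_3B}, \end{aligned} $$ these functions extend smoothly to $t\in[0,\infty)$, and they satisfy: $A_1(0)=0$, $|A_1'(0)|=4$; $A_2(0)=-A_3(0)\neq0$, $A_2'(0)=A_3'(0)$; $B(0)\ne0$, $B'(0)=0$; $C(0)\neq0$,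 $C'(0)=0$; and each function has constant sign on $(0,\infty)$.
   Context: Primes denote $d/dt$. These are the smoothness conditions at the zero section for a metric $dt^2+A_1^2\eta_1^2+A_2^2\eta_2^2+A_3^2\eta_3^2+B^2(\eta_4^2+\eta_5^2)+C^2(\eta_6^2+\eta_7^2)$ to extend over the complex line bundle obtained by collapsing the circle generated by the first characteristic field of a $3$-Sasakian $7$-manifold. *)

From Stdlib Require Import Reals Lra.
Open Scope R_scope.

Definition Pf (alpha r : R) : R := r ^ 8 - 2 * alpha ^ 4 * (r ^ 4 - 1) - 1.

Definition integrand (alpha s : R) : R :=
  s ^ 2 * sqrt (s ^ 4 - alpha ^ 4) / sqrt (Pf alpha s).

Definition improper_int_left (f : R -> R) (a b l : R) : Prop :=
  a < b /\
  (forall x, a < x <= b -> inhabited (Riemann_integrable f x b)) /\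
  (forall eps, 0 < eps -> exists delta, 0 < delta /\
     forall x (pr : Riemann_integrable f x b),
       a < x < a + delta -> x <= b -> Rabs (RiemannInt pr - l) < eps).

Definition integral_from (f : R -> R) (a b l : R) : Prop :=
  (b = a /\ l = 0) \/ improper_int_left f a b l.

Definition smooth (f : R -> R) : Prop :=
  exists D : nat -> R -> R, D 0%nat = f /\
    forall n x, derivable_pt_lim (D n) x (D (S n) x).

Definition A1f (alpha : R) (rr : R -> R) (t : R) : R :=
  - sqrt (Pf alpha (rr t)) / (rr t * sqrt (rr t ^ 4 - alpha ^ 4)).
Definition A2f (rr : R -> R) (t : R) : R := rr t.
Definition A3f (rr : R -> R) (t : R) : R := - rr t.
Definition Bf (alpha : R) (rr : R -> R) (t : R) : R := sqrt (rr t ^ 2 + alpha ^ 2).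
Definition Cf (alpha : R) (rr : R -> R) (t : R) : R := sqrt (rr t ^ 2 - alpha ^ 2).

Definition const_sign_pos (f : R -> R) : Prop :=
  (forall t, 0 < t -> 0 < f t) \/ (forall t, 0 < t -> f t < 0).

From Stdlib Require Import Reals Lra Psatz Ranalysis5.
Open Scope R_scope.

(* Substituting [r = 1 + u^2] factors [P(r) = u^2 D(u)] and turns [dt/dr = integrand r] into
   the autonomous equation [u' = V(u)], [V(u) = sqrt D(u) / (2 (1 + u^2)^2 sqrt Q(u))], where
   [D] and [Q(u) = (1 + u^2)^4 - alpha^4] are polynomials that are positive on the whole real
   line because [alpha < 1].  Hence [V] is smooth, positive and bounded, and [u] is the inverse
   of the travel time [x |-> \int_0^x 1/V], a smooth increasing bijection of R with [u(0) = 0].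
   Each of [A1, A2, A3, B, C] is an algebraic expression in [u], [1/(1 + u^2)] and the square
   roots of [D], [Q], [(1 + u^2)^2 +- alpha^2], which stays smooth through [u = 0]; derivatives
   along [u' = V(u)] are again such expressions, so the ODE system and the boundary values at
   [t = 0] reduce to field identities between these radicals. *)

Lemma derivable_pt_lim_inv_fun (f : R -> R) x l :
  derivable_pt_lim f x l -> f x <> 0 ->
  derivable_pt_lim (fun y => / f y) x (- l / f x ^ 2).
Proof.
  intros Hf Hfx.
  assert (H := derivable_pt_lim_div (fct_cte 1) f x 0 l (derivable_pt_lim_const 1 x) Hf Hfx).
  unfold div_fct, fct_cte, Rsqr in H.
  replace (- l / f x ^ 2) with ((0 * f x - l * 1) / (f x * f x)) by (field; exact Hfx).
  apply (derivable_pt_lim_ext (fun y => 1 / f y)); [intro y; unfold Rdiv; ring | exact H].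
Qed.

Lemma derivable_pt_lim_sqrt_fun (f : R -> R) x l :
  derivable_pt_lim f x l -> 0 < f x ->
  derivable_pt_lim (fun y => sqrt (f y)) x (l / (2 * sqrt (f x))).
Proof.
  intros Hf Hfx.
  replace (l / (2 * sqrt (f x))) with (/ (2 * sqrt (f x)) * l) by (unfold Rdiv; ring).
  exact (derivable_pt_lim_comp f sqrt x l _ Hf (derivable_pt_lim_sqrt _ Hfx)).
Qed.

Inductive poly_expr :=
  | PConst (c : R) | PVar | PAdd (p q : poly_expr) | PMul (p q : poly_expr).

Fixpoint peval (x : R) (p : poly_expr) : R :=
  match p with
  | PConst c => c
  | PVar => x
  | PAdd p q => peval x p + peval x q
  | PMul p q => peval x p * peval x q
  end.

Fixpoint pderiv (p : poly_expr) : poly_expr :=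
  match p with
  | PConst _ => PConst 0
  | PVar => PConst 1
  | PAdd p q => PAdd (pderiv p) (pderiv q)
  | PMul p q => PAdd (PMul (pderiv p) q) (PMul p (pderiv q))
  end.

Lemma derivable_pt_lim_peval p x :
  derivable_pt_lim (fun x => peval x p) x (peval x (pderiv p)).
Proof.
  induction p; simpl.
  - exact (derivable_pt_lim_const c x).
  - exact (derivable_pt_lim_id x).
  - exact (derivable_pt_lim_plus _ _ _ _ _ IHp1 IHp2).
  - exact (derivable_pt_lim_mult _ _ _ _ _ IHp1 IHp2).
Qed.

(* Given everywhere positive polynomials, these expressions form a class of smooth functions
   closed under differentiation. *)
Inductive expr (K : Type) :=
  | EConst (c : R) | EVar
  | EInv (k : K) | ESqrt (k : K) | EInvSqrt (k : K)
  | EAdd (e f : expr K) | EMul (e f : expr K).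
Arguments EConst {K} c.
Arguments EVar {K}.
Arguments EInv {K} k.
Arguments ESqrt {K} k.
Arguments EInvSqrt {K} k.
Arguments EAdd {K} e f.
Arguments EMul {K} e f.

Fixpoint expr_of_poly {K : Type} (p : poly_expr) : expr K :=
  match p with
  | PConst c => EConst c
  | PVar => EVar
  | PAdd p q => EAdd (expr_of_poly p) (expr_of_poly q)
  | PMul p q => EMul (expr_of_poly p) (expr_of_poly q)
  end.

Section AlgebraicExpressions.
Variables (K : Type) (poly_of : K -> poly_expr).
Hypothesis poly_of_pos : forall k x, 0 < peval x (poly_of k).

Fixpoint eval (x : R) (e : expr K) : R :=
  match e with
  | EConst c => c
  | EVar => x
  | EInv k => / peval x (poly_of k)
  | ESqrt k => sqrt (peval x (poly_of k))
  | EInvSqrt k => / sqrt (peval x (poly_of k))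
  | EAdd e f => eval x e + eval x f
  | EMul e f => eval x e * eval x f
  end.

Lemma eval_expr_of_poly x p : eval x (expr_of_poly p) = peval x p.
Proof. induction p; simpl; congruence. Qed.

Definition datom (e : expr K) : expr K :=
  match e with
  | EVar => EConst 1
  | EInv k => EMul (EConst (-1))
      (EMul (expr_of_poly (pderiv (poly_of k))) (EMul (EInv k) (EInv k)))
  | ESqrt k => EMul (EConst (1/2)) (EMul (expr_of_poly (pderiv (poly_of k))) (EInvSqrt k))
  | EInvSqrt k => EMul (EConst (-1/2))
      (EMul (expr_of_poly (pderiv (poly_of k)))
         (EMul (EInvSqrt k) (EMul (EInvSqrt k) (EInvSqrt k))))
  | _ => EConst 0
  end.

(* [dexpr w e] is the derivative of [t |-> eval (v t) e] for any [v] with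
   [v' t = eval (v t) w]. *)
Fixpoint dexpr (w e : expr K) : expr K :=
  match e with
  | EConst _ => EConst 0
  | EAdd e f => EAdd (dexpr w e) (dexpr w f)
  | EMul e f => EAdd (EMul (dexpr w e) f) (EMul e (dexpr w f))
  | a => EMul (datom a) w
  end.

Definition is_atom (e : expr K) : bool :=
  match e with EConst _ | EAdd _ _ | EMul _ _ => false | _ => true end.

Lemma derivable_pt_lim_eval_atom (a : expr K) x :
  is_atom a = true -> derivable_pt_lim (fun x => eval x a) x (eval x (datom a)).
Proof.
  intros Ha. destruct a as [| |k|k|k| |]; try discriminate; simpl;
    [exact (derivable_pt_lim_id x) | ..]; rewrite eval_expr_of_poly;
    assert (Hp := derivable_pt_lim_peval (poly_of k) x);
    assert (Hpos := poly_of_pos k x); assert (Hsq := sqrt_lt_R0 _ Hpos);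
    set (p := peval x (poly_of k)) in *; set (p' := peval x (pderiv (poly_of k))) in *.
  - replace (-1 * _) with (- p' / p ^ 2) by (field; lra).
    exact (derivable_pt_lim_inv_fun _ x _ Hp (Rgt_not_eq _ _ Hpos)).
  - replace (1 / 2 * _) with (p' / (2 * sqrt p)) by (field; lra).
    exact (derivable_pt_lim_sqrt_fun _ x _ Hp Hpos).
  - replace (-1 / 2 * _) with (- (p' / (2 * sqrt p)) / sqrt p ^ 2) by (field; lra).
    exact (derivable_pt_lim_inv_fun _ x _ (derivable_pt_lim_sqrt_fun _ x _ Hp Hpos)
             (Rgt_not_eq _ _ Hsq)).
Qed.

Lemma derivable_pt_lim_eval_comp (v : R -> R) (w : expr K) :
  (forall t, derivable_pt_lim v t (eval (v t) w)) ->
  forall e t, derivable_pt_lim (fun t => eval (v t) e) t (eval (v t) (dexpr w e)).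
Proof.
  intros Hv e t.
  assert (Hatom : forall a, is_atom a = true ->
            derivable_pt_lim (fun t => eval (v t) a) t (eval (v t) (EMul (datom a) w))).
  { intros a Ha. exact (derivable_pt_lim_comp v (fun x => eval x a) t _ _ (Hv t)
                          (derivable_pt_lim_eval_atom a (v t) Ha)). }
  induction e; simpl dexpr; try (apply Hatom; reflexivity).
  - exact (derivable_pt_lim_const c t).
  - exact (derivable_pt_lim_plus _ _ _ _ _ IHe1 IHe2).
  - exact (derivable_pt_lim_mult _ _ _ _ _ IHe1 IHe2).
Qed.

Lemma smooth_eval_comp (v : R -> R) (w : expr K) :
  (forall t, derivable_pt_lim v t (eval (v t) w)) ->
  forall e, smooth (fun t => eval (v t) e).
Proof.
  intros Hv e. exists (fun n t => eval (v t) (Nat.iter n (dexpr w) e)). split.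
  - reflexivity.
  - intros n x. apply derivable_pt_lim_eval_comp; exact Hv.
Qed.

Lemma continuity_eval (e : expr K) : continuity (fun x => eval x e).
Proof.
  intro x. apply derivable_continuous_pt. exists (eval x (dexpr (EConst 1) e)).
  exact (derivable_pt_lim_eval_comp (fun x => x) (EConst 1) derivable_pt_lim_id e x).
Qed.

End AlgebraicExpressions.

Arguments eval {K} poly_of x e.
Arguments dexpr {K} poly_of w e.
Arguments derivable_pt_lim_eval_comp {K poly_of} poly_of_pos v w Hv e t.
Arguments smooth_eval_comp {K poly_of} poly_of_pos v w Hv e.
Arguments continuity_eval {K poly_of} poly_of_pos e.

Lemma RiemannInt_antiderivative (f F : R -> R) a b (pr : Riemann_integrable f a b) :
  a <= b ->
  (forall x, a <= x <= b -> continuity_pt f x) ->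
  (forall x, a <= x <= b -> derivable_pt_lim F x (f x)) ->
  RiemannInt pr = F b - F a.
Proof.
  intros Hab Hc HF.
  rewrite (RiemannInt_P20 Hab (FTC_P1 Hab Hc) pr).
  assert (HF' : antiderivative f F a b).
  { split; [|exact Hab]. intros x Hx. exists (exist _ (f x) (HF x Hx)). reflexivity. }
  destruct (antiderivative_Ucte _ _ _ _ _ (RiemannInt_P29 Hab Hc) HF') as [c Hc'].
  rewrite (Hc' b), (Hc' a); [ring | lra | lra].
Qed.

(* The autonomous equation [u' = V(u), u(0) = 0] with a continuous, positive, bounded
   speed [V]: its solution is the inverse of the travel time [x |-> \int_0^x 1/V]. *)
Section AutonomousFlow.
Variables (V : R -> R) (Vmax : R).
Hypothesis V_cont : continuity V.
Hypothesis V_pos : forall x, 0 < V x.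
Hypothesis V_le : forall x, V x <= Vmax.

Lemma Vmax_pos : 0 < Vmax.
Proof. apply (Rlt_le_trans _ (V 0)); [apply V_pos | apply V_le]. Qed.

Lemma continuity_inv_speed : continuity (fun x => / V x).
Proof. intro x. apply continuity_pt_inv; [apply V_cont | apply Rgt_not_eq, V_pos]. Qed.

Definition inv_speed_integrable a b : Riemann_integrable (fun x => / V x) a b.
Proof.
  destruct (Rle_dec a b) as [Hab|Hab].
  - apply continuity_implies_RiemannInt; [exact Hab | intros; apply continuity_inv_speed].
  - apply RiemannInt_P1, continuity_implies_RiemannInt; [lra | intros; apply continuity_inv_speed].
Defined.

Definition travel_time x := RiemannInt (inv_speed_integrable 0 x).

Lemma travel_time_0 : travel_time 0 = 0.
Proof. apply RiemannInt_P9. Qed.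

Lemma derivable_pt_lim_travel_time x : derivable_pt_lim travel_time x (/ V x).
Proof.
  assert (Hab : x - 1 <= x + 1) by lra.
  assert (Hc : forall y, x - 1 <= y <= x + 1 -> continuity_pt (fun x => / V x) y)
    by (intros; apply continuity_inv_speed).
  apply (derivable_pt_lim_locally_ext
           (fun y => travel_time (x - 1) + primitive Hab (FTC_P1 Hab Hc) y) _ x (x - 1) (x + 1));
    [lra | |].
  - intros y Hy. unfold primitive.
    destruct (Rle_dec (x - 1) y) as [h1|h1]; [|lra].
    destruct (Rle_dec y (x + 1)) as [h2|h2]; [|lra].
    apply RiemannInt_P26.
  - replace (/ V x) with (0 + / V x) by ring.
    apply (derivable_pt_lim_plus (fct_cte (travel_time (x - 1))) (primitive Hab (FTC_P1 Hab Hc)));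
      [apply derivable_pt_lim_const | exact (RiemannInt_P28 Hab Hc (x:=x) ltac:(lra))].
Qed.

Lemma continuity_travel_time : continuity travel_time.
Proof.
  intro x. apply derivable_continuous_pt. exists (/ V x). apply derivable_pt_lim_travel_time.
Qed.

Lemma travel_time_lower_bound a b : a <= b -> (b - a) / Vmax <= travel_time b - travel_time a.
Proof.
  intros [Hab|<-]; [|unfold Rdiv; rewrite !Rminus_diag; lra].
  assert (Hd : derivable travel_time)
    by (intro x; exists (/ V x); apply derivable_pt_lim_travel_time).
  destruct (MVT_cor1 travel_time a b Hd Hab) as [c [-> _]].
  replace (derive_pt travel_time c (Hd c)) with (/ V c)
    by (symmetry; apply derive_pt_eq_0, derivable_pt_lim_travel_time).
  unfold Rdiv. rewrite Rmult_comm. apply Rmult_le_compat_r; [lra|].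
  apply Rinv_le_contravar; [apply V_pos | apply V_le].
Qed.

Lemma travel_time_increasing x y : x < y -> travel_time x < travel_time y.
Proof.
  intro Hxy. assert (H := travel_time_lower_bound x y (Rlt_le _ _ Hxy)).
  assert (0 < (y - x) / Vmax) by (apply Rdiv_lt_0_compat; [lra | exact Vmax_pos]).
  lra.
Qed.

Lemma travel_time_surjective t : {x | travel_time x = t}.
Proof.
  assert (HVmax := Vmax_pos).
  set (M := (Rabs t + 1) * Vmax).
  assert (HM : 0 < M) by (unfold M; assert (0 <= Rabs t) by apply Rabs_pos; nra).
  assert (L1 := travel_time_lower_bound (- M) 0 ltac:(lra)).
  assert (L2 := travel_time_lower_bound 0 M ltac:(lra)).
  rewrite travel_time_0 in L1, L2.
  replace ((0 - - M) / Vmax) with (Rabs t + 1) in L1 by (unfold M; field; lra).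
  replace ((M - 0) / Vmax) with (Rabs t + 1) in L2 by (unfold M; field; lra).
  assert (Ht := Rle_abs t). assert (Ht' := Rle_abs (- t)). rewrite Rabs_Ropp in Ht'.
  destruct (IVT (fun x => travel_time x - t) (- M) M) as [x [_ Hx]]; try lra.
  - intro x. apply continuity_pt_minus; [apply continuity_travel_time|].
    apply continuity_pt_const. intros ? ?. reflexivity.
  - exists x. lra.
Qed.

Definition flow t := proj1_sig (travel_time_surjective t).

Lemma travel_time_flow t : travel_time (flow t) = t.
Proof. exact (proj2_sig (travel_time_surjective t)). Qed.

Lemma flow_travel_time x : flow (travel_time x) = x.
Proof.
  set (y := flow (travel_time x)).
  assert (Hy : travel_time y = travel_time x) by apply travel_time_flow.
  destruct (Rtotal_order y x) as [h|[h|h]]; [| exact h |];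
    apply travel_time_increasing in h; lra.
Qed.

Lemma flow_0 : flow 0 = 0.
Proof. rewrite <- travel_time_0 at 1. apply flow_travel_time. Qed.

Lemma flow_increasing s t : s < t -> flow s < flow t.
Proof.
  intro Hst. destruct (Rlt_le_dec (flow s) (flow t)) as [h|h]; [exact h|].
  destruct h as [h|h].
  - apply travel_time_increasing in h. rewrite !travel_time_flow in h. lra.
  - apply (f_equal travel_time) in h. rewrite !travel_time_flow in h. lra.
Qed.

Lemma flow_nondecreasing s t : s <= t -> flow s <= flow t.
Proof. intros [h|h]; [apply Rlt_le, flow_increasing, h | subst; apply Rle_refl]. Qed.

Lemma derivable_pt_lim_flow t : derivable_pt_lim flow t (V (flow t)).
Proof.
  assert (Hd : forall x, derivable_pt travel_time x)
    by (intro x; exists (/ V x); apply derivable_pt_lim_travel_time).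
  assert (Hincr : flow (t - 1) <= flow t <= flow (t + 1))
    by (split; apply flow_nondecreasing; lra).
  assert (Hc : continuity_pt flow t).
  { apply (continuity_pt_recip_interv travel_time flow (flow t - 1) (flow t + 1)); try lra.
    - intros; apply travel_time_increasing; lra.
    - intros; unfold comp, id; apply travel_time_flow.
    - intros x H1 H2. apply flow_nondecreasing in H1, H2. rewrite !flow_travel_time in H1, H2. lra.
    - intros; apply continuity_travel_time.
    - assert (E := travel_time_flow t).
      split; [rewrite <- E at 2 | rewrite <- E at 1]; apply travel_time_increasing; lra. }
  assert (H := derivable_pt_lim_recip_interv travel_time flow (t - 1) (t + 1) t
                 (fun a _ => Hd a) Hc ltac:(lra) ltac:(lra) Hincr (fun x _ => travel_time_flow x)).
  cbv beta in H.
  replace (derive_pt travel_time (flow t) (Hd (flow t))) with (/ V (flow t)) in H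
    by (symmetry; apply derive_pt_eq_0, derivable_pt_lim_travel_time).
  assert (HV := V_pos (flow t)).
  replace (V (flow t)) with (1 / / V (flow t)) by (field; lra).
  apply H. apply Rgt_not_eq, Rinv_0_lt_compat, HV.
Qed.

End AutonomousFlow.

Section ImproperIntegral.
Variables (f F : R -> R) (a : R).
Hypothesis F_cont : continuity_pt F a.
Hypothesis f_cont : forall x, a < x -> continuity_pt f x.
Hypothesis F_deriv : forall x, a < x -> derivable_pt_lim F x (f x).

Lemma RiemannInt_right_of x b (pr : Riemann_integrable f x b) :
  a < x -> x <= b -> RiemannInt pr = F b - F x.
Proof.
  intros Hx Hxb. apply RiemannInt_antiderivative; [exact Hxb | |];
    intros y Hy; [apply f_cont | apply F_deriv]; lra.
Qed.

Lemma continuity_pt_right_of eps : 0 < eps ->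
  exists d, 0 < d /\ forall x, a <= x < a + d -> Rabs (F x - F a) < eps.
Proof.
  intros Heps. destruct (F_cont eps Heps) as [d [Hd HdF]]. exists d. split; [exact Hd|].
  intros x Hx. destruct (Req_dec x a) as [->|Hxa].
  - rewrite Rminus_diag, Rabs_R0. exact Heps.
  - apply (HdF x). split; [split; [exact I | congruence] |].
    simpl. unfold R_dist. rewrite Rabs_right; lra.
Qed.

Lemma improper_int_left_antiderivative b : a < b -> improper_int_left f a b (F b - F a).
Proof.
  intros Hab. split; [exact Hab | split].
  - intros x Hx. constructor. apply continuity_implies_RiemannInt; [lra|].
    intros y Hy. apply f_cont. lra.
  - intros eps Heps. destruct (continuity_pt_right_of eps Heps) as [d [Hd HdF]].
    exists d. split; [exact Hd|]. intros x pr Hx Hxb.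
    rewrite (RiemannInt_right_of x b pr) by lra.
    replace (F b - F x - (F b - F a)) with (- (F x - F a)) by ring.
    rewrite Rabs_Ropp. apply HdF. lra.
Qed.

Lemma improper_int_left_unique b l : improper_int_left f a b l -> l = F b - F a.
Proof.
  intros [Hab [Hint Hlim]].
  destruct (Req_dec l (F b - F a)) as [E|E]; [exact E|exfalso].
  set (eps := Rabs (l - (F b - F a)) / 2).
  assert (Heps : 0 < eps) by (unfold eps; assert (0 < Rabs (l - (F b - F a))) by
                                (apply Rabs_pos_lt; lra); lra).
  destruct (Hlim eps Heps) as [d1 [Hd1 Hd1']].
  destruct (continuity_pt_right_of eps Heps) as [d2 [Hd2 Hd2']].
  set (x := a + Rmin (Rmin d1 d2) (b - a) / 2).
  assert (Hm : 0 < Rmin (Rmin d1 d2) (b - a)) by (repeat apply Rmin_pos; lra).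
  assert (Hm1 := Rmin_l (Rmin d1 d2) (b - a)). assert (Hm2 := Rmin_r (Rmin d1 d2) (b - a)).
  assert (Hm3 := Rmin_l d1 d2). assert (Hm4 := Rmin_r d1 d2).
  destruct (Hint x ltac:(unfold x; lra)) as [pr].
  assert (Near_l := Hd1' x pr ltac:(unfold x; lra) ltac:(unfold x; lra)).
  assert (Near_F := Hd2' x ltac:(unfold x; lra)).
  rewrite (RiemannInt_right_of x b pr) in Near_l by (unfold x; lra).
  assert (Rabs (l - (F b - F a)) <= Rabs (F b - F x - l) + Rabs (F x - F a)).
  { replace (l - (F b - F a)) with (- (F b - F x - l) + - (F x - F a)) by ring.
    eapply Rle_trans; [apply Rabs_triang|]. rewrite !Rabs_Ropp. lra. }
  unfold eps in *. lra.
Qed.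

End ImproperIntegral.

Lemma alpha_pow_lt_1 al : 0 <= al -> al < 1 -> al ^ 2 < 1 /\ 0 <= al ^ 4 < 1.
Proof. intros. assert (al ^ 2 < 1) by nra. split; [|split]; [lra | apply pow_le; lra | nra]. Qed.

Lemma Pf_factor al r : Pf al r = (r ^ 4 - 1) * (r ^ 4 + 1 - 2 * al ^ 4).
Proof. unfold Pf. ring. Qed.

Lemma Pf_1 al : Pf al 1 = 0.
Proof. unfold Pf. ring. Qed.

Lemma Pf_pos al r : 0 <= al -> al < 1 -> 1 < r -> 0 < Pf al r.
Proof.
  intros ha0 ha1 Hr. rewrite Pf_factor. destruct (alpha_pow_lt_1 al ha0 ha1) as [_ [h1 h2]].
  assert (1 < r ^ 4) by (assert (1 < r ^ 2) by nra; nra).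
  apply Rmult_lt_0_compat; lra.
Qed.

Lemma Pf_root_le_1 al r : 0 <= al -> al < 1 -> Pf al r = 0 -> r <= 1.
Proof.
  intros ha0 ha1 Hr. destruct (Rle_lt_dec r 1) as [h|h]; [exact h|].
  assert (H := Pf_pos al r ha0 ha1 h). lra.
Qed.

Inductive radicand := rS | rD | rQ | rB | rC.

Definition shift_sq : poly_expr := PAdd (PConst 1) (PMul PVar PVar).

(* For [r = S(u) = 1 + u^2]: [Pf r = u^2 D(u)], [r^4 - al^4 = Q(u)], [r^2 + al^2 = B(u)] and
   [r^2 - al^2 = C(u)]. *)
Definition radicand_poly (al : R) (k : radicand) : poly_expr :=
  let s2 := PMul shift_sq shift_sq in
  let s4 := PMul s2 s2 in
  match k with
  | rS => shift_sq
  | rD => PMul (PMul (PAdd shift_sq (PConst 1)) (PAdd s2 (PConst 1)))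
             (PAdd s4 (PConst (1 - 2 * al ^ 4)))
  | rQ => PAdd s4 (PConst (- al ^ 4))
  | rB => PAdd s2 (PConst (al ^ 2))
  | rC => PAdd s2 (PConst (- al ^ 2))
  end.

Lemma radicand_poly_pos al : 0 <= al -> al < 1 ->
  forall k x, 0 < peval x (radicand_poly al k).
Proof.
  intros ha0 ha1 k x. destruct (alpha_pow_lt_1 al ha0 ha1) as [h2 [h4 h4']].
  assert (Hs : 1 <= 1 + x * x) by nra.
  set (s := 1 + x * x) in *.
  assert (1 <= s * s) by nra. assert (1 <= s * s * (s * s)) by nra.
  destruct k; simpl; fold s; try nra.
  apply Rmult_lt_0_compat; [apply Rmult_lt_0_compat|]; nra.
Qed.

Lemma Pf_shift_sq al x : Pf al (1 + x * x) = x * x * peval x (radicand_poly al rD).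
Proof. unfold Pf. cbn [peval radicand_poly shift_sq]. ring. Qed.

Definition rhs_A1 (A1 A2 A3 B C : R) : R :=
  ((A2 - A3) ^ 2 - A1 ^ 2) / (A2 * A3) + A1 ^ 2 * (B ^ 2 + C ^ 2) / (B ^ 2 * C ^ 2).
Definition rhs_A2 (A1 A2 A3 B C : R) : R :=
  (A1 ^ 2 - A2 ^ 2 + A3 ^ 2) / (A1 * A3) - (B ^ 2 + C ^ 2 - 2 * A2 ^ 2) / (B * C).
Definition rhs_A3 (A1 A2 A3 B C : R) : R :=
  (A1 ^ 2 + A2 ^ 2 - A3 ^ 2) / (A1 * A2) - (B ^ 2 + C ^ 2 - 2 * A3 ^ 2) / (B * C).
Definition rhs_B (A1 A2 A3 B C : R) : R :=
  - (C * A1 + B * A2 + B * A3) / (B * C) - (C ^ 2 - B ^ 2) * (A2 + A3) / (2 * A2 * A3 * C).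
Definition rhs_C (A1 A2 A3 B C : R) : R :=
  - (B * A1 + C * A2 + C * A3) / (B * C) - (B ^ 2 - C ^ 2) * (A2 + A3) / (2 * A2 * A3 * B).

Definition solves_ode (A1 A2 A3 B C : R -> R) (t : R) : Prop :=
  derivable_pt_lim A1 t (rhs_A1 (A1 t) (A2 t) (A3 t) (B t) (C t)) /\
  derivable_pt_lim A2 t (rhs_A2 (A1 t) (A2 t) (A3 t) (B t) (C t)) /\
  derivable_pt_lim A3 t (rhs_A3 (A1 t) (A2 t) (A3 t) (B t) (C t)) /\
  derivable_pt_lim B t (rhs_B (A1 t) (A2 t) (A3 t) (B t) (C t)) /\
  derivable_pt_lim C t (rhs_C (A1 t) (A2 t) (A3 t) (B t) (C t)).

Definition smooth_at_zero_section (A1 A2 A3 B C : R -> R) : Prop :=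
  exists g1 g2 g3 gB gC : R -> R,
    smooth g1 /\ smooth g2 /\ smooth g3 /\ smooth gB /\ smooth gC /\
    (forall t, 0 <= t ->
       g1 t = A1 t /\ g2 t = A2 t /\ g3 t = A3 t /\ gB t = B t /\ gC t = C t) /\
    g1 0 = 0 /\ (exists d, derivable_pt_lim g1 0 d /\ Rabs d = 4) /\
    g2 0 = - g3 0 /\ g2 0 <> 0 /\
    (exists d, derivable_pt_lim g2 0 d /\ derivable_pt_lim g3 0 d) /\
    gB 0 <> 0 /\ derivable_pt_lim gB 0 0 /\
    gC 0 <> 0 /\ derivable_pt_lim gC 0 0.

Section MetricCoefficients.
Variable al : R.
Hypothesis ha0 : 0 <= al.
Hypothesis ha1 : al < 1.

Notation val := (eval (radicand_poly al)).
Notation rad_pos := (radicand_poly_pos al ha0 ha1).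

Definition speed : expr radicand :=
  EMul (EConst (1/2)) (EMul (ESqrt rD) (EMul (EInvSqrt rQ) (EMul (EInv rS) (EInv rS)))).

Notation dval e x := (val x (dexpr (radicand_poly al) speed e)).

Definition speed_max := 1 + 2 / (1 - al ^ 4).

Lemma speed_pos x : 0 < val x speed.
Proof.
  cbn [eval].
  assert (HD := sqrt_lt_R0 _ (rad_pos rD x)). assert (HQ := sqrt_lt_R0 _ (rad_pos rQ x)).
  assert (0 < / peval x (radicand_poly al rS)) by apply Rinv_0_lt_compat, rad_pos.
  assert (0 < / sqrt (peval x (radicand_poly al rQ))) by (apply Rinv_0_lt_compat; exact HQ).
  repeat apply Rmult_lt_0_compat; lra.
Qed.

Lemma speed_le x : val x speed <= speed_max.
Proof.
  destruct (alpha_pow_lt_1 al ha0 ha1) as [_ [h4 h4']].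
  assert (ED := sqrt_sqrt _ (Rlt_le _ _ (rad_pos rD x))).
  assert (EQ := sqrt_sqrt _ (Rlt_le _ _ (rad_pos rQ x))).
  assert (HQ := sqrt_lt_R0 _ (rad_pos rQ x)).
  assert (Hv := speed_pos x). unfold speed_max, speed in *.
  (* [D <= 8 s^8] and [Q >= (1 - al^4) s^4] give [speed^2 <= 2 / (1 - al^4)], with [s = 1 + x^2]. *)
  cbn [eval] in Hv |- *.
  set (d := sqrt (peval x (radicand_poly al rD))) in *.
  set (q := sqrt (peval x (radicand_poly al rQ))) in *.
  cbn [peval radicand_poly shift_sq] in *.
  set (s := 1 + x * x) in *. assert (Hs : 1 <= s) by (unfold s; nra).
  set (v := 1 / 2 * (d * (/ q * (/ s * / s)))) in *.
  set (a4 := al ^ 4) in *.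
  assert (Hvd : v * (2 * q * (s * s)) = d) by (unfold v; field; lra).
  assert (Hs2 : 1 <= s * s) by nra. assert (Hs4 : 1 <= s * s * (s * s)) by nra.
  assert (Hd : d * d <= 8 * (s * s * (s * s)) * (s * s * (s * s))).
  { rewrite ED.
    assert (H1 : (s + 1) * (s * s + 1) <= 4 * (s * (s * s))) by nra.
    assert (H2 : s * s * (s * s) + (1 - 2 * a4) <= 2 * (s * s * (s * s))) by nra.
    apply (Rle_trans _ (4 * (s * (s * s)) * (2 * (s * s * (s * s))))); [|nra].
    apply Rmult_le_compat; nra. }
  assert (Hq : (1 - a4) * (s * s * (s * s)) <= q * q) by (rewrite EQ; nra).
  assert (Hv2 : v * v * (1 - a4) <= 2).
  { set (s4 := s * s * (s * s)) in *.
    assert (E : d * d = v * v * (4 * (q * q) * s4)) by (rewrite <- Hvd; unfold s4; ring).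
    assert (v * v * (1 - a4) * (4 * s4 * s4) <= 2 * (4 * s4 * s4)).
    { replace (v * v * (1 - a4) * (4 * s4 * s4)) with (v * v * (4 * ((1 - a4) * s4) * s4)) by ring.
      apply (Rle_trans _ (d * d)); [rewrite E | lra].
      apply Rmult_le_compat_l; [nra|]. apply Rmult_le_compat_r; lra. }
    apply (Rmult_le_reg_r (4 * s4 * s4)); [nra | exact H]. }
  assert (v * v <= 2 / (1 - a4)) by (apply (Rmult_le_reg_r (1 - a4)); [lra|]; field_simplify; lra).
  assert (v <= 1 + v * v) by nra. lra.
Qed.

Notation travel := (travel_time (fun x => val x speed) (continuity_eval rad_pos speed) speed_pos).

Definition u_flow : R -> R :=
  flow (fun x => val x speed) speed_max (continuity_eval rad_pos speed) speed_pos speed_le.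

Lemma derivable_pt_lim_u_flow t : derivable_pt_lim u_flow t (val (u_flow t) speed).
Proof. apply derivable_pt_lim_flow. Qed.

Lemma u_flow_0 : u_flow 0 = 0.
Proof. apply flow_0. Qed.

Lemma u_flow_pos t : 0 < t -> 0 < u_flow t.
Proof. intro Ht. rewrite <- u_flow_0. apply flow_increasing, Ht. Qed.

Lemma u_flow_nonneg t : 0 <= t -> 0 <= u_flow t.
Proof. intro Ht. rewrite <- u_flow_0. apply flow_nondecreasing, Ht. Qed.

Lemma derivable_pt_lim_along_flow e t :
  derivable_pt_lim (fun t => val (u_flow t) e) t (dval e (u_flow t)).
Proof. exact (derivable_pt_lim_eval_comp rad_pos u_flow speed derivable_pt_lim_u_flow e t). Qed.

Lemma smooth_along_flow e : smooth (fun t => val (u_flow t) e).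
Proof. exact (smooth_eval_comp rad_pos u_flow speed derivable_pt_lim_u_flow e). Qed.

Definition time_of_radius (r : R) : R :=
  travel (sqrt (r - 1)).

Lemma time_of_radius_1 : time_of_radius 1 = 0.
Proof. unfold time_of_radius. rewrite Rminus_diag, sqrt_0. apply travel_time_0. Qed.

Lemma time_of_radius_u_flow t : 0 <= t -> time_of_radius (1 + u_flow t * u_flow t) = t.
Proof.
  intro Ht. unfold time_of_radius.
  replace (1 + u_flow t * u_flow t - 1) with (u_flow t * u_flow t) by ring.
  rewrite sqrt_square by (apply u_flow_nonneg, Ht). apply travel_time_flow.
Qed.

Lemma u_flow_time_of_radius r : u_flow (time_of_radius r) = sqrt (r - 1).
Proof. apply flow_travel_time. Qed.

Lemma integrand_shift_sq w : 0 < w -> integrand al (1 + w * w) = / val w speed / (2 * w).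
Proof.
  intro Hw. unfold integrand, speed. cbn [eval].
  assert (HD := sqrt_lt_R0 _ (rad_pos rD w)). assert (HQ := sqrt_lt_R0 _ (rad_pos rQ w)).
  assert (HS := rad_pos rS w). assert (HDp := rad_pos rD w).
  rewrite Pf_shift_sq, sqrt_mult, sqrt_square by (nra || lra).
  replace ((1 + w * w) ^ 4 - al ^ 4) with (peval w (radicand_poly al rQ)) by (cbn; ring).
  replace (peval w (radicand_poly al rS)) with (1 + w * w) in * by reflexivity.
  field. repeat split; lra.
Qed.

Lemma derivable_pt_lim_time_of_radius r : 1 < r ->
  derivable_pt_lim time_of_radius r (integrand al r).
Proof.
  intro Hr. set (w := sqrt (r - 1)).
  assert (Hw : 0 < w) by (apply sqrt_lt_R0; lra).
  assert (Hww : w * w = r - 1) by (apply sqrt_sqrt; lra).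
  assert (Dw : derivable_pt_lim (fun r => sqrt (r - 1)) r (1 / (2 * w))).
  { apply derivable_pt_lim_sqrt_fun; [|lra].
    replace 1 with (1 - 0) at 1 by ring.
    apply (derivable_pt_lim_minus id (fct_cte 1));
      [apply derivable_pt_lim_id | apply derivable_pt_lim_const]. }
  assert (H := derivable_pt_lim_comp _ travel r _ _ Dw (derivable_pt_lim_travel_time _ _ _ w)).
  assert (Er : integrand al r = integrand al (1 + w * w)) by (f_equal; lra).
  rewrite Er, integrand_shift_sq by exact Hw.
  replace (/ val w speed / (2 * w)) with (/ val w speed * (1 / (2 * w)))
    by (assert (Hv := speed_pos w); field; repeat split; lra).
  exact H.
Qed.

Lemma continuity_pt_integrand r : 1 < r -> continuity_pt (integrand al) r.
Proof.
  intro Hr. assert (HP := Pf_pos al r ha0 ha1 Hr). unfold Pf in HP.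
  destruct (alpha_pow_lt_1 al ha0 ha1) as [_ [h4 h4']].
  assert (1 < r ^ 4) by (assert (1 < r ^ 2) by nra; nra).
  unfold integrand, Pf. reg; try lra. apply Rgt_not_eq, sqrt_lt_R0. exact HP.
Qed.

Lemma continuity_pt_time_of_radius_1 : continuity_pt time_of_radius 1.
Proof.
  apply (continuity_pt_comp (fun r => sqrt (r - 1)) travel); [|apply continuity_travel_time].
  apply (continuity_pt_comp (fun r => r - 1) sqrt); [reg | apply continuity_pt_sqrt; lra].
Qed.

Lemma integral_from_time_of_radius r : 1 <= r ->
  integral_from (integrand al) 1 r (time_of_radius r).
Proof.
  intros [Hr|<-]; [right | left; split; [reflexivity | apply time_of_radius_1]].
  rewrite <- (Rminus_0_r (time_of_radius r)), <- time_of_radius_1.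
  apply improper_int_left_antiderivative; [exact continuity_pt_time_of_radius_1 | | | exact Hr];
    intros; [apply continuity_pt_integrand | apply derivable_pt_lim_time_of_radius]; assumption.
Qed.

Lemma integral_from_unique r l : integral_from (integrand al) 1 r l -> l = time_of_radius r.
Proof.
  intros [[-> ->] | Hl]; [symmetry; apply time_of_radius_1|].
  rewrite <- (Rminus_0_r (time_of_radius r)), <- time_of_radius_1.
  apply (improper_int_left_unique (integrand al));
    [exact continuity_pt_time_of_radius_1 | | | exact Hl];
    intros; [apply continuity_pt_integrand | apply derivable_pt_lim_time_of_radius]; assumption.
Qed.

Definition coef_A1 : expr radicand :=
  EMul (EConst (-1)) (EMul EVar (EMul (ESqrt rD) (EMul (EInv rS) (EInvSqrt rQ)))).
Definition coef_A2 : expr radicand := EAdd (EConst 1) (EMul EVar EVar).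
Definition coef_A3 : expr radicand := EMul (EConst (-1)) coef_A2.
Definition coef_B : expr radicand := ESqrt rB.
Definition coef_C : expr radicand := ESqrt rC.

Lemma metric_at_shift_sq rr t x : 0 <= x -> rr t = 1 + x * x ->
  A1f al rr t = val x coef_A1 /\ A2f rr t = val x coef_A2 /\ A3f rr t = val x coef_A3 /\
  Bf al rr t = val x coef_B /\ Cf al rr t = val x coef_C.
Proof.
  intros Hx Hr. unfold A1f, A2f, A3f, Bf, Cf. rewrite Hr.
  cbn [eval coef_A1 coef_A2 coef_A3 coef_B coef_C].
  assert (HQ := sqrt_lt_R0 _ (rad_pos rQ x)). assert (HD := rad_pos rD x).
  rewrite Pf_shift_sq, sqrt_mult, sqrt_square by nra.
  replace ((1 + x * x) ^ 4 - al ^ 4) with (peval x (radicand_poly al rQ)) by (cbn; ring).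
  replace ((1 + x * x) ^ 2 + al ^ 2) with (peval x (radicand_poly al rB)) by (cbn; ring).
  replace ((1 + x * x) ^ 2 - al ^ 2) with (peval x (radicand_poly al rC)) by (cbn; ring).
  replace (peval x (radicand_poly al rS)) with (1 + x * x) by reflexivity.
  repeat split; try ring. field. split; nra.
Qed.

Notation at_coefs f x :=
  (f (val x coef_A1) (val x coef_A2) (val x coef_A3) (val x coef_B) (val x coef_C)).

(* Abstracts each square root of a radicand into a positive variable whose square is the
   radicand, then expands all polynomials. *)
Ltac expand_radicals x sD sQ sB sC ED EQ EB EC :=
  cbn [eval dexpr datom speed coef_A1 coef_A2 coef_A3 coef_B coef_C]; rewrite ?eval_expr_of_poly;
  let name k s Ek :=
    let Hk := fresh in let Pk := fresh in
    assert (Hk := rad_pos k x); assert (Ek := sqrt_sqrt _ (Rlt_le _ _ Hk));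
    assert (Pk := sqrt_lt_R0 _ Hk);
    set (s := sqrt (peval x (radicand_poly al k))) in *; clearbody s in
  name rD sD ED; name rQ sQ EQ; name rB sB EB; name rC sC EC;
  assert (HS := rad_pos rS x);
  cbn [peval radicand_poly shift_sq pderiv] in *.

Ltac solve_radical_identity ED EQ EB EC :=
  let E2 := fresh in let E4 := fresh in
  assert (E2 : forall y : R, y ^ 2 = y * y) by (intro; ring);
  assert (E4 : forall y : R, y ^ 4 = y * y * (y * y)) by (intro; ring);
  field_simplify_eq; [rewrite ?E2, ?E4, ?ED, ?EQ, ?EB, ?EC; ring | repeat split; lra].

Lemma coefficients_ode x : 0 < x ->
  dval coef_A1 x = at_coefs rhs_A1 x /\ dval coef_A2 x = at_coefs rhs_A2 x /\
  dval coef_A3 x = at_coefs rhs_A3 x /\ dval coef_B x = at_coefs rhs_B x /\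
  dval coef_C x = at_coefs rhs_C x.
Proof.
  intro Hx. unfold rhs_A1, rhs_A2, rhs_A3, rhs_B, rhs_C. expand_radicals x sD sQ sB sC ED EQ EB EC.
  repeat split; solve_radical_identity ED EQ EB EC.
Qed.

Lemma coefficients_at_0 :
  val 0 coef_A1 = 0 /\ dval coef_A1 0 = -4 /\
  val 0 coef_A2 = - val 0 coef_A3 /\ val 0 coef_A2 <> 0 /\ dval coef_A2 0 = dval coef_A3 0 /\
  val 0 coef_B <> 0 /\ dval coef_B 0 = 0 /\ val 0 coef_C <> 0 /\ dval coef_C 0 = 0.
Proof.
  expand_radicals 0 sD sQ sB sC ED EQ EB EC.
  repeat split; try lra; solve_radical_identity ED EQ EB EC.
Qed.

Lemma radius_exists_unique t : 0 <= t -> exists! r, 1 <= r /\ integral_from (integrand al) 1 r t.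
Proof.
  intro Ht. exists (1 + u_flow t * u_flow t).
  assert (Hge : 1 <= 1 + u_flow t * u_flow t) by nra.
  split.
  - split; [exact Hge|].
    rewrite <- (time_of_radius_u_flow t Ht) at 3. apply integral_from_time_of_radius, Hge.
  - intros r [Hr Hi]. rewrite (integral_from_unique r t Hi), u_flow_time_of_radius, sqrt_sqrt; lra.
Qed.

Section AlongRadius.
Variable rr : R -> R.
Hypothesis rr_spec : forall t, 0 <= t -> 1 <= rr t /\ integral_from (integrand al) 1 (rr t) t.

Lemma radius_on_flow t : 0 <= t -> rr t = 1 + u_flow t * u_flow t.
Proof.
  intro Ht. destruct (rr_spec t Ht) as [Hr Hi].
  rewrite (integral_from_unique _ _ Hi) at 2 3.
  rewrite u_flow_time_of_radius, sqrt_sqrt; lra.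
Qed.

Lemma metric_on_flow t : 0 <= t ->
  A1f al rr t = val (u_flow t) coef_A1 /\ A2f rr t = val (u_flow t) coef_A2 /\
  A3f rr t = val (u_flow t) coef_A3 /\ Bf al rr t = val (u_flow t) coef_B /\
  Cf al rr t = val (u_flow t) coef_C.
Proof. intro Ht. exact (metric_at_shift_sq rr t _ (u_flow_nonneg t Ht) (radius_on_flow t Ht)). Qed.

Lemma derivable_pt_lim_on_flow (F : R -> R) e t : 0 < t ->
  (forall y, 0 <= y -> F y = val (u_flow y) e) -> derivable_pt_lim F t (dval e (u_flow t)).
Proof.
  intros Ht HF.
  apply (derivable_pt_lim_locally_ext (fun y => val (u_flow y) e) F t 0 (2 * t)); [lra | |].
  - intros y Hy. symmetry. apply HF. lra.
  - apply derivable_pt_lim_along_flow.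
Qed.

Lemma metric_solves_ode t : 0 < t ->
  solves_ode (A1f al rr) (A2f rr) (A3f rr) (Bf al rr) (Cf al rr) t.
Proof.
  intro Ht. unfold solves_ode.
  destruct (metric_on_flow t (Rlt_le _ _ Ht)) as [-> [-> [-> [-> ->]]]].
  destruct (coefficients_ode (u_flow t) (u_flow_pos t Ht)) as [<- [<- [<- [<- <-]]]].
  repeat split; apply derivable_pt_lim_on_flow; try exact Ht;
    intros y Hy; destruct (metric_on_flow y Hy) as (?&?&?&?&?); assumption.
Qed.

Lemma metric_smooth_at_zero_section :
  smooth_at_zero_section (A1f al rr) (A2f rr) (A3f rr) (Bf al rr) (Cf al rr).
Proof.
  assert (Hd0 : forall e, derivable_pt_lim (fun t => val (u_flow t) e) 0 (dval e 0))
    by (intro e; rewrite <- u_flow_0 at 2; apply derivable_pt_lim_along_flow).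
  destruct coefficients_at_0 as (V1 & D1 & V23 & V2 & D23 & VB & DB & VC & DC).
  assert (HA1 := Hd0 coef_A1). rewrite D1 in HA1.
  assert (HA3 := Hd0 coef_A3). rewrite <- D23 in HA3.
  assert (HB := Hd0 coef_B). rewrite DB in HB.
  assert (HC := Hd0 coef_C). rewrite DC in HC.
  exists (fun t => val (u_flow t) coef_A1), (fun t => val (u_flow t) coef_A2),
    (fun t => val (u_flow t) coef_A3), (fun t => val (u_flow t) coef_B),
    (fun t => val (u_flow t) coef_C).
  do 5 (split; [apply smooth_along_flow|]).
  split.
  { intros t Ht. destruct (metric_on_flow t Ht) as (?&?&?&?&?).
    repeat split; symmetry; assumption. }
  cbv beta. rewrite u_flow_0.
  split; [exact V1|]. split; [exists (-4); split; [exact HA1 | rewrite Rabs_left; lra]|].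
  split; [exact V23|]. split; [exact V2|].
  split; [exists (dval coef_A2 0); split; [apply Hd0 | exact HA3]|].
  repeat split; assumption.
Qed.

Lemma metric_const_sign :
  const_sign_pos (A1f al rr) /\ const_sign_pos (A2f rr) /\ const_sign_pos (A3f rr) /\
  const_sign_pos (Bf al rr) /\ const_sign_pos (Cf al rr).
Proof.
  destruct (alpha_pow_lt_1 al ha0 ha1) as [h2 [h4 h4']].
  assert (Hr : forall t, 0 < t -> 1 < rr t).
  { intros t Ht. rewrite radius_on_flow by lra. assert (H := u_flow_pos t Ht). nra. }
  unfold const_sign_pos, A1f, A2f, A3f, Bf, Cf.
  repeat split; [right | left | right | left | left]; intros t Ht; assert (H1 := Hr t Ht); try lra.
  - assert (0 < sqrt (Pf al (rr t))) by (apply sqrt_lt_R0, Pf_pos; assumption).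
    assert (0 < sqrt (rr t ^ 4 - al ^ 4)) by (apply sqrt_lt_R0; assert (1 < rr t ^ 2) by nra; nra).
    unfold Rdiv. rewrite Ropp_mult_distr_l_reverse. apply Ropp_lt_gt_0_contravar.
    apply Rmult_lt_0_compat; [assumption|]. apply Rinv_0_lt_compat. nra.
  - apply sqrt_lt_R0. nra.
  - apply sqrt_lt_R0. nra.
Qed.
End AlongRadius.
End MetricCoefficients.

Theorem mainTheorem4 (alpha : R) (ha0 : 0 <= alpha) (ha1 : alpha < 1) :
  Pf alpha 1 = 0 /\
  (forall r, 1 < r -> 0 < Pf alpha r) /\
  (forall r, Pf alpha r = 0 -> r <= 1) /\
  1 > alpha /\
  (forall r, 1 <= r -> exists l, integral_from (integrand alpha) 1 r l) /\
  (forall t, 0 <= t -> exists! r, 1 <= r /\ integral_from (integrand alpha) 1 r t) /\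
  (forall rr : R -> R,
    (forall t, 0 <= t -> 1 <= rr t /\ integral_from (integrand alpha) 1 (rr t) t) ->
    let A1 := A1f alpha rr in
    let A2 := A2f rr in
    let A3 := A3f rr in
    let B := Bf alpha rr in
    let C := Cf alpha rr in
    (forall t, 0 < t ->
       derivable_pt_lim A1 t
         (((A2 t - A3 t) ^ 2 - A1 t ^ 2) / (A2 t * A3 t)
          + A1 t ^ 2 * (B t ^ 2 + C t ^ 2) / (B t ^ 2 * C t ^ 2)) /\
       derivable_pt_lim A2 t
         ((A1 t ^ 2 - A2 t ^ 2 + A3 t ^ 2) / (A1 t * A3 t)
          - (B t ^ 2 + C t ^ 2 - 2 * A2 t ^ 2) / (B t * C t)) /\
       derivable_pt_lim A3 t
         ((A1 t ^ 2 + A2 t ^ 2 - A3 t ^ 2) / (A1 t * A2 t)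
          - (B t ^ 2 + C t ^ 2 - 2 * A3 t ^ 2) / (B t * C t)) /\
       derivable_pt_lim B t
         (- (C t * A1 t + B t * A2 t + B t * A3 t) / (B t * C t)
          - (C t ^ 2 - B t ^ 2) * (A2 t + A3 t) / (2 * A2 t * A3 t * C t)) /\
       derivable_pt_lim C t
         (- (B t * A1 t + C t * A2 t + C t * A3 t) / (B t * C t)
          - (B t ^ 2 - C t ^ 2) * (A2 t + A3 t) / (2 * A2 t * A3 t * B t))) /\
    (exists g1 g2 g3 gB gC : R -> R,
       smooth g1 /\ smooth g2 /\ smooth g3 /\ smooth gB /\ smooth gC /\
       (forall t, 0 <= t ->
          g1 t = A1 t /\ g2 t = A2 t /\ g3 t = A3 t /\ gB t = B t /\ gC t = C t) /\
       g1 0 = 0 /\ (exists d, derivable_pt_lim g1 0 d /\ Rabs d = 4) /\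
       g2 0 = - g3 0 /\ g2 0 <> 0 /\
       (exists d, derivable_pt_lim g2 0 d /\ derivable_pt_lim g3 0 d) /\
       gB 0 <> 0 /\ derivable_pt_lim gB 0 0 /\
       gC 0 <> 0 /\ derivable_pt_lim gC 0 0) /\
    const_sign_pos A1 /\ const_sign_pos A2 /\ const_sign_pos A3 /\
    const_sign_pos B /\ const_sign_pos C).
Proof.
  split; [apply Pf_1|].
  split; [intros r Hr; exact (Pf_pos alpha r ha0 ha1 Hr)|].
  split; [intros r; exact (Pf_root_le_1 alpha r ha0 ha1)|].
  split; [exact ha1|].
  split; [intros r Hr; eexists; exact (integral_from_time_of_radius alpha ha0 ha1 r Hr)|].
  split; [exact (radius_exists_unique alpha ha0 ha1)|].
  intros rr Hrr. cbv zeta.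
  split; [exact (metric_solves_ode alpha ha0 ha1 rr Hrr)|].
  split; [exact (metric_smooth_at_zero_section alpha ha0 ha1 rr Hrr)|].
  exact (metric_const_sign alpha ha0 ha1 rr Hrr).
Qed.
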